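(* Let $h_1,\dots,h_n$ be $n$ distinct tasks and let $h_i^*\in\mathcal{H}_{\min}(h_i)$ for every $i\in[n]$. Let $\Phi:\{-1,1\}^m\to\mathcal{Z}$ and $g_1,\dots,g_n:\mathcal{Z}\to\mathbb{R}$ be such that $g_i\circ\Phi\in\mathcal{H}(h_i)$ for every $i\in[n]$. Let $\Phi^*=(\Phi^*_1,\dots,\Phi^*_d)\in\mathcal{H}_{\min}(\Phi)$. Then, writing $h^*=(h_1^*,\dots,h_n^* )$ and $g=(g_1,\dots,g_n)$, $$\widehat{\deg}(h^* )-\widehat{\deg}(g\circ\Phi^* )\;\ge\;\sum_{i=1}^n\deg(h_i\mid\Phi^* )-d^2,$$ where $\widehat{\deg}(h^* )=\sum_{i}\deg(h_i^* )$ and $\widehat{\deg}(g\circ\Phi^* )=\sum_i\deg(g_i)+\sum_{j=1}^d\deg(\Phi^*_j)$.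
   Context: Standing setup: integers $m\ge d\ge 1$, $\mathcal{Z}=\{-1,1\}^d$, and $\psi:\mathcal{Z}\to\{-1,1\}^m$ is injective; $\mathcal{X}:=\psi(\mathcal{Z})$. The latent distribution $p$ on $\mathcal{Z}$ has $\mathrm{supp}(p)=\mathcal{Z}$. Every $f:\{-1,1\}^n\to\mathbb{R}$ has a unique expansion $f(x)=\sum_{S\subseteq[n]}\hat f(S)\chi_S(x)$ with $\chi_S(x)=\prod_{i\in S}x_i$; $\deg(f)=\max\{|S|:\hat f(S)\ne0\}$ (degree $0$ for constants). For a multi-output map $f=(f_1,\dots,f_q)$, $\deg(f):=\sum_i\deg(f_i)$. A task is $h:\{-1,1\}^m\to\mathbb{R}$ of which only the values on $\mathcal{X}$ matter; $\mathcal{H}(h):=\{f:\{-1,1\}^m\to\mathbb{R}\mid f=h\text{ on }\mathcal{X}\}$; $\mathcal{H}_{\min}(h)$ is the set of minimum-degree elements of $\mathcal{H}(h)$, whose common degree is written $\deg(\mathcal{H}_{\min}(h))$. For the multi-output $\Phi$, $\mathcal{H}(\Phi)$ is the set of maps $\{-1,1\}^m\to\mathbb{R}^d$ agreeing with $\Phi$ on $\mathcal{X}$, and $\mathcal{H}_{\min}(\Phi)$ its elements minimizing $\sum_j\deg(\cdot_j)$. A composition $g\circ\Phi'$ with $g:\mathcal{Z}\to\mathbb{R}$ is evaluated via the multilinear (Fourier–Walsh) polynomial of $g$; its realization degree is $\widehat{\deg}(g\circ\Phi')=\deg(g)+\deg(\Phi')$, and for a tuple of realizations realization degrees add. Conditional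 degree: for a task $h$ and a representation $\Phi'$ for which some $g$ with $g\circ\Phi'\in\mathcal{H}(h)$ exists, $\deg(h\mid\Phi'):=\deg(\mathcal{H}_{\min}(h))-\max\{\deg(g):g:\mathcal{Z}\to\mathbb{R},\ g\circ\Phi'\in\mathcal{H}(h)\}$. *)

From mathcomp Require Import all_boot all_order all_algebra.
From mathcomp Require Import boolp reals.
Set Implicit Arguments. Unset Strict Implicit. Unset Printing Implicit Defensive.
Import Order.TTheory GRing.Theory Num.Theory.
Local Open Scope ring_scope.

Section Defs.
Variable R : realType.

(* The hypercube {-1,1}^n, a point being encoded by its sign pattern. *)
Definition cube (n : nat) := {ffun 'I_n -> bool}.

Definition spin (b : bool) : R := if b then 1 else -1.

Definition chi n (S : {set 'I_n}) (x : cube n) : R :=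
  \prod_(i in S) spin (x i).

(* Fourier-Walsh coefficient: the unique coefficient of chi_S in the
   expansion of f (computed by orthogonality). *)
Definition fhat n (f : cube n -> R) (S : {set 'I_n}) : R :=
  (2 ^+ n)^-1 * \sum_(x : cube n) f x * chi S x.

Definition deg n (f : cube n -> R) : nat :=
  \max_(S : {set 'I_n} | fhat f S != 0) #|S|.

Definition mlext d (g : cube d -> R) (y : 'I_d -> R) : R :=
  \sum_(S : {set 'I_d}) fhat g S * \prod_(j in S) y j.

(* Composition g o Phi' of g : Z -> R with a real multi-output map,
   evaluated via the multilinear polynomial of g. *)
Definition compml m d (g : cube d -> R) (Phi' : cube m -> 'I_d -> R)
  : cube m -> R := fun x => mlext g (Phi' x).

(* H(h): functions agreeing with h on X = psi(Z). *)
Definition inH m d (psi : cube d -> cube m) (h f : cube m -> R) : Prop :=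
  forall z : cube d, f (psi z) = h (psi z).

Definition inHmin m d (psi : cube d -> cube m) (h f : cube m -> R) : Prop :=
  inH psi h f /\ forall f', inH psi h f' -> (deg f <= deg f')%N.

(* deg(H_min(h)): the least degree of an element of H(h)
   (all degrees on {-1,1}^m are <= m, and H(h) contains h). *)
Definition degHmin m d (psi : cube d -> cube m) (h : cube m -> R) : nat :=
  \big[minn/m]_(k < m.+1 | `[< exists f, inH psi h f /\ deg f = k >]) k.

Definition embed m d (Phi : cube m -> cube d) : cube m -> 'I_d -> R :=
  fun x j => spin (Phi x j).

Definition inHmap m d (psi : cube d -> cube m) (Phi : cube m -> cube d)
  (Phi' : cube m -> 'I_d -> R) : Prop :=
  forall z : cube d, Phi' (psi z) = embed Phi (psi z).

Definition degmap m d (Phi' : cube m -> 'I_d -> R) : nat :=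
  (\sum_(j < d) deg (fun x => Phi' x j))%N.

Definition inHminmap m d (psi : cube d -> cube m) (Phi : cube m -> cube d)
  (Phi' : cube m -> 'I_d -> R) : Prop :=
  inHmap psi Phi Phi' /\
  forall Phi'', inHmap psi Phi Phi'' -> (degmap Phi' <= degmap Phi'')%N.

(* max { deg g : g : Z -> R, g o Phi' in H(h) }  (every such degree is <= d). *)
Definition maxgdeg m d (psi : cube d -> cube m) (h : cube m -> R)
  (Phi' : cube m -> 'I_d -> R) : nat :=
  \max_(k < d.+1 | `[< exists g : cube d -> R,
                         inH psi h (compml g Phi') /\ deg g = k >]) k.

Definition condDeg m d (psi : cube d -> cube m) (h : cube m -> R)
  (Phi' : cube m -> 'I_d -> R) : int :=
  (degHmin psi h)%:Z - (maxgdeg psi h Phi')%:Z.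

End Defs.

From mathcomp Require Import all_boot all_order all_algebra.
From mathcomp Require Import boolp reals.
From mathcomp Require Import zify ring.
Import Order.TTheory GRing.Theory Num.Theory.
Set Implicit Arguments. Unset Strict Implicit. Unset Printing Implicit Defensive.
Local Open Scope ring_scope.

(* Task by task, h_i' lies in H(h_i) and so does g_i o Phi' (the multilinear
   polynomial of g_i agrees with g_i on the cube, and Phi' agrees with Phi on
   X), so deg(h_i | Phi') <= deg h_i' - deg g_i.  Summing leaves the bound
   deg Phi' <= d^2: any real function on a set of fewer than 2^(k+1) points
   of the cube is interpolated by a polynomial of degree at most k (split the
   set along a coordinate where it is not constant, interpolate on the larger
   half with degree k and correct on the smaller half, of size < 2^k, by
   (1 +- x_i)/2 times a polynomial of degree k-1), and |X| <= 2^d, so each of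
   the d components of Phi has an extension of degree <= d. *)

Section Walsh.
Variable R : realType.

Lemma spin_mul_self b : spin R b * spin R b = 1.
Proof. by case: b; rewrite /spin ?mulrNN mulr1. Qed.

Lemma spin_mul_neq b c : c != b -> spin R b * spin R c = -1.
Proof. by case: b; case: c => //= _; rewrite /spin ?mulrN ?mulNr mulr1. Qed.

Lemma spinN b : spin R (~~ b) = - spin R b.
Proof. by case: b; rewrite /spin ?opprK. Qed.

Lemma card_cube n : #|{: cube n}| = (2 ^ n)%N.
Proof. by rewrite card_ffun card_bool card_ord. Qed.

Lemma cube_neq n (x y : cube n) : x != y -> exists i, x i != y i.
Proof.
move=> xy; apply/existsP; move: xy; apply: contraR; rewrite negb_exists.
by move=> /forallP xy; apply/eqP/ffunP => i; apply/eqP; rewrite -[_ == _]negbK xy.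
Qed.

Definition flip n (i : 'I_n) (x : cube n) : cube n :=
  [ffun j => if j == i then ~~ x j else x j].

Lemma flipK n i : involutive (@flip n i).
Proof. by move=> x; apply/ffunP => j; rewrite !ffunE; case: (j == i); rewrite ?negbK. Qed.

Lemma chi_flip n (S : {set 'I_n}) i x :
  chi R S (flip i x) = (if i \in S then -1 else 1) * chi R S x.
Proof.
rewrite /chi; case: ifP => iS.
  rewrite (bigD1 i iS) [in RHS](bigD1 i iS) /= ffunE eqxx spinN mulN1r mulNr.
  by congr (- (_ * _)); apply: eq_bigr => j /andP [_ /negbTE ji]; rewrite ffunE ji.
rewrite mul1r; apply: eq_bigr => j jS; rewrite ffunE; case: eqP => // ji.
by rewrite -ji jS in iS.
Qed.

Lemma chi_orthogonal n (S T : {set 'I_n}) :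
  \sum_(x : cube n) chi R S x * chi R T x = if S == T then (2 ^ n)%:R else 0.
Proof.
case: eqP => [<-|/eqP ST].
  rewrite (eq_bigr (fun _ => 1)) ?sumr_const ?card_cube // => x _.
  by rewrite /chi -big_split /= big1 // => i _; rewrite spin_mul_self.
have [i iST] : exists i, (i \in S) != (i \in T).
  apply/existsP; move: ST; apply: contraR; rewrite negb_exists => /forallP ST.
  by apply/eqP/setP => i; apply/eqP; rewrite -[_ == _]negbK ST.
set s := \sum_x _; have /eqP : s = - s.
  rewrite {1}/s (reindex_inj (inv_inj (@flipK n i))) -sumrN.
  apply: eq_bigr => x _; rewrite !chi_flip.
  by case: (i \in S) (i \in T) iST => -[] //= _; rewrite ?mulN1r ?mul1r ?mulrN ?mulNr.
by rewrite -subr_eq0 opprK -mulr2n -mulr_natr mulf_eq0 pnatr_eq0 orbF => /eqP.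
Qed.

Lemma chi_complete n (x y : cube n) :
  \sum_(S : {set 'I_n}) chi R S x * chi R S y = if x == y then (2 ^ n)%:R else 0.
Proof.
pose a i := spin R (x i) * spin R (y i).
transitivity (\prod_(i < n) (a i + 1)).
  rewrite bigA_distr; apply: eq_bigr => S _.
  by rewrite /chi -big_split /= big_mkcond.
case: eqP => [xy|/eqP /cube_neq [i xyi]].
  rewrite (eq_bigr (fun _ => 2)) ?prodr_const ?card_ord ?natrX // => i _.
  by rewrite /a xy spin_mul_self.
by rewrite (bigD1 i) //= /a spin_mul_neq 1?eq_sym // addNr mul0r.
Qed.

Lemma two_expr_neq0 n : (2 ^+ n : R) != 0.
Proof. by rewrite expf_neq0 // pnatr_eq0. Qed.

Definition walsh m (c : {set 'I_m} -> R) (x : cube m) : R :=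
  \sum_(S : {set 'I_m}) c S * chi R S x.

Lemma walsh_fhat n (g : cube n -> R) : walsh (fhat g) =1 g.
Proof.
move=> y; rewrite /walsh /fhat.
under eq_bigr do rewrite -mulrA mulr_suml.
rewrite -mulr_sumr exchange_big /=.
under eq_bigr => x _ do under eq_bigr do rewrite -mulrA.
under eq_bigr do rewrite -mulr_sumr chi_complete.
rewrite (bigD1 y) //= eqxx big1 => [|x /negbTE ->]; last by rewrite mulr0.
by rewrite addr0 natrX mulrCA mulVf ?mulr1 // two_expr_neq0.
Qed.

Lemma fhat_walsh m (c : {set 'I_m} -> R) : fhat (walsh c) =1 c.
Proof.
move=> T; rewrite /fhat /walsh.
under eq_bigr do rewrite mulr_suml.
rewrite exchange_big /=.
under eq_bigr => S _ do under eq_bigr do rewrite -mulrA.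
under eq_bigr do rewrite -mulr_sumr chi_orthogonal.
rewrite (bigD1 T) //= eqxx big1 => [|S /negbTE ->]; last by rewrite mulr0.
by rewrite addr0 natrX mulrCA mulVf ?mulr1 // two_expr_neq0.
Qed.

Lemma walshD m (c1 c2 : {set 'I_m} -> R) x :
  walsh (fun S => c1 S + c2 S) x = walsh c1 x + walsh c2 x.
Proof. by rewrite /walsh -big_split; apply: eq_bigr => S _; rewrite mulrDl. Qed.

Lemma walshZ m a (c : {set 'I_m} -> R) x :
  walsh (fun S => a * c S) x = a * walsh c x.
Proof. by rewrite /walsh mulr_sumr; apply: eq_bigr => S _; rewrite mulrA. Qed.

Lemma deg_le_dim n (f : cube n -> R) : (deg f <= n)%N.
Proof. by apply/bigmax_leqP => S _; rewrite -[leqRHS]card_ord max_card. Qed.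

Lemma deg_walsh_le m (c : {set 'I_m} -> R) k :
  (forall S : {set 'I_m}, (k < #|S|)%N -> c S = 0) -> (deg (walsh c) <= k)%N.
Proof.
move=> ck; apply/bigmax_leqP => S; rewrite fhat_walsh; apply: contraR.
by rewrite -ltnNge => /ck ->; rewrite eqxx.
Qed.

Lemma mlext_embed m d (g : cube d -> R) (Phi : cube m -> cube d) x :
  mlext g (embed R Phi x) = g (Phi x).
Proof. exact: walsh_fhat. Qed.

End Walsh.

Section Interpolation.
Variables (R : realType) (m : nat).
Implicit Types (S : {set 'I_m}) (c A B : {set 'I_m} -> R).
Implicit Types (X : {set cube m}) (v : cube m -> R).

Definition toggle (i : 'I_m) (S : {set 'I_m}) : {set 'I_m} :=
  if i \in S then S :\ i else i |: S.

Lemma toggleK i : involutive (toggle i).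
Proof.
move=> S; rewrite /toggle; case iS: (i \in S).
  by rewrite setD11 setD1K.
by rewrite setU11 setU1K ?iS.
Qed.

Lemma card_toggle i S : (#|S| <= #|toggle i S|.+1)%N.
Proof.
rewrite /toggle; case: ifP => iS; first by rewrite (cardsD1 i S) iS.
by rewrite cardsU1 iS leqW.
Qed.

Lemma chi_toggle i S (x : cube m) : spin R (x i) * chi R S x = chi R (toggle i S) x.
Proof.
rewrite /chi /toggle; case: ifP => iS.
  by rewrite (big_setD1 i iS) mulrA spin_mul_self mul1r.
by rewrite big_setU1 ?iS.
Qed.

Lemma spin_mul_walsh (i : 'I_m) c (x : cube m) :
  spin R (x i) * walsh c x = walsh (c \o toggle i) x.
Proof.
rewrite /walsh mulr_sumr (reindex_inj (inv_inj (toggleK i))).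
by apply: eq_bigr => S _; rewrite mulrCA chi_toggle toggleK.
Qed.

Definition slice (i : 'I_m) b : {set cube m} := [set z : cube m | z i == b].

(* Coefficients of [walsh A + (x_i == b) * walsh B], from the identity
   [(x_i == b) = (1 + spin b * spin x_i) / 2]. *)
Definition walsh_select (i : 'I_m) b A B S : R :=
  A S + 2^-1 * (B S + spin R b * B (toggle i S)).

Lemma walsh_selectE (i : 'I_m) b A B (x : cube m) :
  walsh (walsh_select i b A B) x = walsh A x + (x i == b)%:R * walsh B x.
Proof.
rewrite walshD walshZ walshD walshZ -spin_mul_walsh.
have two_neq0 : (2 : R) != 0 by rewrite pnatr_eq0.
by case: b (x i) => -[] /=; rewrite /spin; field.
Qed.

Definition interpolates k X v c : Prop :=
  (forall S, (k < #|S|)%N -> c S = 0) /\ {in X, walsh c =1 v}.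

Lemma interpolates_le1 k X v : (#|X| <= 1)%N -> exists c, interpolates k X v c.
Proof.
move=> /card_le1_eqP X1; case: (set_0Vmem X) => [->|[x0 x0X]].
  by exists (fun _ => 0); split => // x; rewrite inE.
exists (fun S => if S == set0 then v x0 else 0); split.
  by move=> S; case: eqP => // ->; rewrite cards0.
move=> x xX; rewrite (X1 x x0 xX x0X) /walsh (bigD1 set0) //= eqxx big1.
  by rewrite /chi big_set0 mulr1 addr0.
by move=> S /negbTE ->; rewrite mul0r.
Qed.

Lemma interpolates_select k X v i b A B :
  interpolates k.+1 (X :\: slice i b) v A ->
  interpolates k (X :&: slice i b) (fun z => v z - walsh A z) B ->
  interpolates k.+1 X v (walsh_select i b A B).
Proof.
move=> [A0 Av] [B0 Bv]; split=> [S kS|z zX].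
  have toggle_ge := card_toggle i S.
  by rewrite /walsh_select A0 // !B0 ?(mulr0, addr0, add0r) //; lia.
rewrite walsh_selectE; have [zb|zb] := eqVneq (z i) b.
  by rewrite /= mul1r Bv ?subrKC // !inE zX; apply/eqP.
by rewrite /= mul0r addr0 Av // !inE zX zb.
Qed.

Lemma slice_cut X i b :
  (#|X :&: slice i b| + #|X :\: slice i b| = #|X|)%N /\
  #|X :\: slice i b| = #|X :&: slice i (~~ b)|.
Proof.
split; first exact: cardsID.
suff -> : X :\: slice i b = X :&: slice i (~~ b) by [].
by apply/setP => z; rewrite !inE andbC; case: (z i) b => -[]; rewrite ?andbT ?andbF.
Qed.

Lemma exists_balanced_cut X : (1 < #|X|)%N -> exists i b,
  [/\ (0 < #|X :&: slice i b|)%N, (0 < #|X :\: slice i b|)%N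
    & (2 * #|X :&: slice i b| <= #|X|)%N].
Proof.
move=> /card_gt1P [x [y [xX yX /cube_neq [i xyi]]]]; exists i.
have meets b : (0 < #|X :&: slice i b|)%N.
  apply/card_gt0P; have [<-|xb] := eqVneq (x i) b.
    by exists x; rewrite !inE xX eqxx.
  by exists y; rewrite !inE yX; case: (x i) (y i) b xyi xb => -[] [].
have [_ comp_t] := slice_cut X i true.
have [cut_f comp_f] := slice_cut X i false; rewrite /= in comp_f.
have [half|half] := leqP (2 * #|X :&: slice i true|) #|X|.
  by exists true; rewrite comp_t meets.
exists false; rewrite comp_f meets; split=> //.
by move: half; rewrite -cut_f comp_f; move: #|_| #|_| => f t; lia.
Qed.

Lemma walsh_interpolation k X v :
  (#|X| < 2 ^ k.+1)%N -> exists c, interpolates k X v c.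
Proof.
have [N] := ubnP #|X|; elim: N => // N IH in k X v *; rewrite ltnS => XN Xk.
have [X1|X2] := leqP #|X| 1; first exact: interpolates_le1.
have [i [b [sl_gt0 cosl_gt0 half]]] := exists_balanced_cut X2.
have [cut _] := slice_cut X i b.
case: k Xk => [|k] Xk; first by rewrite expn1 in Xk; lia.
have [A interpA] : exists A, interpolates k.+1 (X :\: slice i b) v A.
  by apply: IH; lia.
have [B interpB] : exists B,
    interpolates k (X :&: slice i b) (fun z => v z - walsh A z) B.
  by apply: IH; rewrite expnS in Xk; lia.
by exists (walsh_select i b A B); apply: interpolates_select.
Qed.

End Interpolation.

Lemma big_minn_le (I : eqType) (r : seq I) (P : pred I) (F : I -> nat) x0 j :
  j \in r -> P j -> (\big[minn/x0]_(i <- r | P i) F i <= F j)%N.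
Proof.
elim: r => // a r IH; rewrite inE big_cons => /orP [/eqP <-|jr] Pj.
  by rewrite Pj geq_minl.
by case: (P a); [apply: leq_trans (geq_minr _ _) _|]; apply: IH.
Qed.

Section ConditionalDegree.
Variables (R : realType) (m d : nat) (psi : cube d -> cube m).

Lemma degHmin_le (h f : cube m -> R) : inH psi h f -> (degHmin psi h <= deg f)%N.
Proof.
move=> hf; have deg_lt : (deg f < m.+1)%N by rewrite ltnS deg_le_dim.
apply: (@big_minn_le _ _ _ (fun k : 'I_m.+1 => nat_of_ord k) _ (Ordinal deg_lt)).
  exact: mem_index_enum.
by apply/asboolP; exists f.
Qed.

Lemma maxgdeg_ge (h : cube m -> R) (Phi' : cube m -> 'I_d -> R) (g : cube d -> R) :
  inH psi h (compml g Phi') -> (deg g <= maxgdeg psi h Phi')%N.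
Proof.
move=> hg; have deg_lt : (deg g < d.+1)%N by rewrite ltnS deg_le_dim.
by apply: (leq_bigmax_cond (Ordinal deg_lt)); apply/asboolP; exists g.
Qed.

Lemma inH_compml (h : cube m -> R) (Phi : cube m -> cube d)
    (Phi' : cube m -> 'I_d -> R) (g : cube d -> R) :
  inHmap psi Phi Phi' -> inH psi h (g \o Phi) -> inH psi h (compml g Phi').
Proof. by move=> PhiPhi' hg z; rewrite /compml PhiPhi' mlext_embed; apply: hg. Qed.

Lemma condDeg_le (h hs : cube m -> R) (Phi : cube m -> cube d)
    (Phi' : cube m -> 'I_d -> R) (g : cube d -> R) :
  inHmin psi h hs -> inHmap psi Phi Phi' -> inH psi h (g \o Phi) ->
  condDeg psi h Phi' <= (deg hs)%:Z - (deg g)%:Z.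
Proof.
move=> [hs_h _] PhiPhi' hg; rewrite /condDeg lerB ?lez_nat //.
  exact: degHmin_le.
exact/maxgdeg_ge/inH_compml.
Qed.

Lemma degmap_Hmin_le (Phi : cube m -> cube d) (Phi' : cube m -> 'I_d -> R) :
  inHminmap psi Phi Phi' -> (degmap Phi' <= d ^ 2)%N.
Proof.
move=> [_ Phi'_min]; set X := [set psi z | z : cube d].
have X_small : (#|X| < 2 ^ d.+1)%N.
  apply: leq_ltn_trans (leq_imset_card _ _) _.
  by rewrite card_cube expnS ltn_Pmull ?expn_gt0.
have /fin_all_exists [C interpC] : forall j : 'I_d,
    exists c, interpolates d X (fun x => spin R (Phi x j)) c.
  by move=> j; apply: walsh_interpolation.
pose Phi2 x j := walsh (C j) x.
have PhiPhi2 : inHmap psi Phi Phi2.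
  move=> z; apply: funext => j.
  by rewrite /Phi2 /embed (proj2 (interpC j)) //; apply/imsetP; exists z.
apply: leq_trans (Phi'_min _ PhiPhi2) _.
rewrite /degmap expnS expn1 -[X in (_ <= X * _)%N]card_ord -sum_nat_const.
by apply: leq_sum => j _; apply/deg_walsh_le/(proj1 (interpC j)).
Qed.

End ConditionalDegree.

Theorem theorem2 (R : realType) (m d : nat) (hdm : (d <= m)%N) (hd : (0 < d)%N)
  (psi : cube d -> cube m) (psi_inj : injective psi)
  (p : cube d -> R) (p_pos : forall z, 0 < p z) (p_sum : \sum_(z : cube d) p z = 1)
  (n : nat) (h : 'I_n -> cube m -> R) (h_distinct : injective h)
  (hs : 'I_n -> cube m -> R) (hs_min : forall i, inHmin psi (h i) (hs i))
  (Phi : cube m -> cube d) (g : 'I_n -> cube d -> R)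
  (hg : forall i, inH psi (h i) (g i \o Phi))
  (Phis : cube m -> 'I_d -> R) (hPhis : inHminmap psi Phi Phis) :
  (\sum_(i < n) deg (hs i))%:Z
    - ((\sum_(i < n) deg (g i))%N + (\sum_(j < d) deg (fun x => Phis x j))%N)%:Z
  >= \sum_(i < n) condDeg psi (h i) Phis - (d ^ 2)%N%:Z.
Proof.
have sum_condDeg : \sum_(i < n) condDeg psi (h i) Phis <=
    (\sum_(i < n) deg (hs i))%:Z - (\sum_(i < n) deg (g i))%:Z.
  rewrite !(big_morph Posz PoszD (erefl 0%:Z)) -sumrB; apply: ler_sum => i _.
  exact: condDeg_le (hs_min i) hPhis.1 (hg i).
have degPhis := degmap_Hmin_le hPhis; rewrite /degmap in degPhis.
lia.
Qed.
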